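(* Let $p$ be an odd prime and $N=C_p\times D_{2p}$, with $C_p=\langle c\rangle$ and $D_{2p}=\langle r,s\mid r^p=s^2=1,\ srs=r^{-1}\rangle$. Let $\varphi\in\mathrm{Aut}(N)$ be given by $\varphi(r)=r,\ \varphi(s)=rs,\ \varphi(c)=c$. Then the $p^2-p$ subgroups $$A_{k,l}=\langle (r,\varphi^k),(c,\varphi^l)\rangle,\quad 0\le k\le p-2,\ 0\le l\le p-1,$$ are isomorphic to $C_p\times C_p$ and are precisely the semiregular subgroups of order $p^2$ of $\mathrm{Hol}(N)$.
   Context: $\mathrm{Hol}(N)=N\rtimes\mathrm{Aut}(N)$, with elements $(x,\varphi)$, product $(x,\varphi)(y,\psi)=(x\varphi(y),\varphi\psi)$, acting on $N$ by $(x,\varphi)\cdot n=x\varphi(n)$. A subgroup is semiregular if all stabilizers of points of $N$ under this action are trivial. *)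

From HB Require Import structures.
From mathcomp Require Import all_boot all_order all_algebra all_fingroup all_solvable.
Set Implicit Arguments. Unset Strict Implicit. Unset Printing Implicit Defensive.

Local Open Scope group_scope.

Section Holomorph.
Variable gT : finGroupType.

Definition lmulp (x : gT) : {perm gT} := perm (mulgI x).

(* the permutation of N = gT induced by the holomorph element (x, f):
   n |-> x * f n   (perm products compose left-to-right: (f * g) n = g (f n)) *)
Definition holp (x : gT) (f : {perm gT}) : {perm gT} := f * lmulp x.

Lemma holpE x f n : holp x f n = x * f n.
Proof. by rewrite /holp permM /lmulp permE. Qed.

(* Hol(N), realised faithfully as the permutation group
   { n |-> x f(n) | x in N, f in Aut N } acting on N = [set: gT] *)
Definition Hol : {set {perm gT}} :=
  [set holp x f | x in [set: gT], f in Aut [set: gT]].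

Definition hol_semiregular (H : {set {perm gT}}) : Prop :=
  forall (h : {perm gT}) (n : gT), h \in H -> h n = n -> h = 1.

Definition Akl (r c : gT) (phi : {perm gT}) (k l : nat) : {set {perm gT}} :=
  <<[set holp r (phi ^+ k); holp c (phi ^+ l)]>>.
End Holomorph.

Arguments Hol gT : clear implicits.
Arguments hol_semiregular {gT} H.
Arguments Akl {gT} r c phi k l.

From HB Require Import structures.
From mathcomp Require Import all_boot all_order all_algebra all_fingroup all_solvable.
From mathcomp Require Import zify.
Set Implicit Arguments. Unset Strict Implicit. Unset Printing Implicit Defensive.

(* Every element of N = C_p x D_2p is c^e r^i s^j, and K = <c> x <r> is the
   subgroup of elements of exponent p.  Since phi fixes c and r, the elements
   (c^e r^i, phi^m) of Hol(N) multiply like C_p^3, and A_{k,l} is the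
   elementary abelian group {(c^y r^x, phi^(kx+ly))} of order p^2.  Such an
   element fixes c^e r^i s^j iff p | y and p | x + (kx+ly)j, which for a
   nontrivial element is only possible when k = p-1.
   Conversely, let H be semiregular of order p^2 and (x, a) in H.  Then x lies
   in K, for otherwise the orbit of 1 would alternate between K and its
   complement while (x, a)^(p^2) = 1 with p^2 odd; and a is an automorphism
   of p-power order, which by Fermat fixes c and r, hence is a power of phi.
   Semiregularity makes h |-> h 1 injective, so by counting H maps onto K; the
   elements of H sending 1 to r and to c are (r, phi^k) and (c, phi^l), and
   they generate H. *)

Lemma expn_pow_prime_mod k q n : prime q -> k ^ (q ^ n) = k %[mod q].
Proof.
move=> q_pr; elim: n => [|n IHn]; first by rewrite expn1.
by rewrite expnSr expnM fermat_little.
Qed.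

Lemma modn_lin a b x y x' y' d : x = x' %[mod d] -> y = y' %[mod d] ->
  a * x + b * y = a * x' + b * y' %[mod d].
Proof.
move=> xx yy; rewrite -modnDm -modnMmr -(modnMmr b) xx yy.
by rewrite modnMmr (modnMmr b) modnDm.
Qed.

Section ElementaryAbelian.
Local Open Scope group_scope.
Variables (p : nat) (p_pr : prime p).

Lemma card_ZpZp : #|[set: 'Z_p * 'Z_p]| = (p ^ 2)%N.
Proof. by rewrite cardsT card_prod card_ord Zp_cast ?prime_gt1 ?mulnn. Qed.

Lemma ZpZp_abelem : p.-abelem [set: 'Z_p * 'Z_p].
Proof.
rewrite abelemE //; apply/andP; split.
  by apply/centsP => -[u1 u2] _ [v1 v2] _; congr (_, _); apply: Zp_mulgC.
have Zp_p (z : 'Z_p) : z ^+ p = 1.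
  by have := expg_cardG (in_setT z); rewrite cardsT card_ord Zp_cast ?prime_gt1.
apply/exponentP => -[u1 u2] _.
have -> n : (u1, u2) ^+ n = (u1 ^+ n, u2 ^+ n) by elim: n => // n IHn; rewrite !expgS IHn.
by rewrite !Zp_p.
Qed.

End ElementaryAbelian.

Section Holomorph.
Local Open Scope group_scope.
Variable gT : finGroupType.
Implicit Types (x y : gT) (f a : {perm gT}).

Lemma mulg_TI_inj (K H : {group gT}) : K :&: H = 1 ->
  {in K &, forall u u', {in H &, forall t t', u * t = u' * t' -> u = u' /\ t = t'}}.
Proof.
move=> tiKH u u' Ku Ku' t t' Ht Ht' eq_ut.
have := congr1 (divgr K H) eq_ut; have := congr1 (remgr K H) eq_ut.
by rewrite !remgrMid // !divgrMid.
Qed.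

Section Automorphism.
Variable a : {perm gT}.
Hypothesis Aa : a \in Aut [set: gT].

Lemma autM x y : a (x * y) = a x * a y.
Proof. by rewrite -(autmE Aa) morphM ?inE. Qed.

Lemma autX x n : a (x ^+ n) = a x ^+ n.
Proof. by rewrite -(autmE Aa) morphX ?inE. Qed.

Lemma aut1 : a 1 = 1.
Proof. by rewrite -(autmE Aa) morph1. Qed.

Lemma autX_eq1 x n : (a x ^+ n == 1) = (x ^+ n == 1).
Proof. by rewrite -autX -{1}aut1 (inj_eq perm_inj). Qed.

End Automorphism.

Lemma holpM x y f a : a \in Aut [set: gT] ->
  holp x f * holp y a = holp (y * a x) (f * a).
Proof. by move=> Aa; apply/permP => n; rewrite permM !holpE permM autM // mulgA. Qed.

Lemma holp1 f : holp 1 f = f.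
Proof. by apply/permP => n; rewrite holpE mul1g. Qed.

Lemma holp_at1 x a : a \in Aut [set: gT] -> holp x a 1 = x.
Proof. by move=> Aa; rewrite holpE aut1 ?mulg1. Qed.

Lemma holpX x a n : a \in Aut [set: gT] -> exists y, holp x a ^+ n = holp y (a ^+ n).
Proof.
move=> Aa; elim: n => [|n [y IH]]; first by exists 1; rewrite !expg0 holp1.
by exists (x * a y); rewrite expgSr IH holpM // expgSr.
Qed.

Lemma semiregular_orbit_inj (H : {group {perm gT}}) :
  hol_semiregular H -> {in H &, injective (fun h : {perm gT} => h 1)}.
Proof.
move=> sregH h1 h2 Hh1 Hh2 /= eq12; apply/eqP; rewrite eq_mulgV1; apply/eqP.
apply: (sregH _ 1); first by rewrite groupM ?groupV.
by rewrite permM eq12 -permM mulgV perm1.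
Qed.

Lemma autX_iter a x k n : a \in Aut [set: gT] -> a x = x ^+ k ->
  (a ^+ n) x = x ^+ (k ^ n).
Proof.
move=> Aa ax; elim: n => [|n IHn]; first by rewrite expg0 perm1 expn0 expg1.
by rewrite expgSr permM IHn autX // ax -expgM expnS.
Qed.

(* x = (a ^+ q ^ n) x = x ^+ (k ^ q ^ n), and k ^ q ^ n = k (mod q) by Fermat. *)
Lemma aut_fixed_of_pow_prime_order a x k q n : a \in Aut [set: gT] ->
  prime q -> #[x] = q -> a ^+ (q ^ n) = 1 -> a x = x ^+ k -> a x = x.
Proof.
move=> Aa q_pr ox aqn ax; rewrite ax; apply/eqP.
rewrite -{2}(expg1 x) eq_expg_mod_order ox eq_sym.
have := autX_iter (q ^ n) Aa ax; rewrite aqn perm1 => /eqP.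
by rewrite -{1}(expg1 x) eq_expg_mod_order ox expn_pow_prime_mod.
Qed.

End Holomorph.

Section CpTimesD2p.
Local Open Scope group_scope.
Variables (p : nat) (gT : finGroupType) (c r s : gT) (phi : {perm gT}).
Hypotheses (p_pr : prime p) (p_odd : odd p)
  (defN : <[c]> \x <<[set r; s]>> = [set: gT])
  (ord_c : #[c] = p) (ord_r : #[r] = p) (ord_s : #[s] = 2) (srs : s * r * s = r^-1)
  (Aphi : phi \in Aut [set: gT]) (phi_r : phi r = r) (phi_s : phi s = r * s)
  (phi_c : phi c = c).

Let p_gt0 := prime_gt0 p_pr.
Let p_gt1 := prime_gt1 p_pr.

Lemma p_gt2 : 2 < p.
Proof. by move: p_gt1 p_odd; case: p => [|[|[|]]]. Qed.

Lemma dvdn_double_odd x : (p %| x + x) = (p %| x).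
Proof. by rewrite addnn -mul2n Gauss_dvdr // coprimen2. Qed.

Lemma expr_p : r ^+ p = 1. Proof. by rewrite -ord_r expg_order. Qed.
Lemma expc_p : c ^+ p = 1. Proof. by rewrite -ord_c expg_order. Qed.

Lemma defD2p : <[r]> ><| <[s]> = <<[set r; s]>>.
Proof.
have nrs : <[s]> \subset 'N(<[r]>).
  by rewrite cycle_subG; apply/normP; rewrite -cycleJ conjgE invg2id // mulgA srs cycleV.
by rewrite sdprodEY ?joing_idl ?joing_idr // coprime_TIg // -!orderE ord_r ord_s coprimen2.
Qed.

Lemma c_central y : commute c y.
Proof.
have [_ defCD cDc _] := dprodP defN.
have sNCc : [set: gT] \subset 'C[c].
  by rewrite -defCD -cent_cycle mul_subG //; apply: cycle_abelian.
by apply/commute_sym/cent1P; apply: (subsetP sNCc); rewrite inE.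
Qed.

Definition nf e i (j : bool) := c ^+ e * r ^+ i * s ^+ j.

Lemma nf_surj y : exists e i j, y = nf e i j.
Proof.
have [_ defCD _ _] := dprodP defN; have [_ defRS _ _] := sdprodP defD2p.
have : y \in <[c]> * <<[set r; s]>> by rewrite defCD inE.
case/mulsgP=> _ g /cycleP[e ->] + ->; rewrite -defRS.
case/mulsgP=> _ _ /cycleP[i ->] /cycleP[k ->] ->.
exists e, i, (odd k).
by rewrite /nf mulgA -(expg_mod_order s) ord_s modn2; case: (odd k).
Qed.

Lemma s_expr i : s * r ^+ i = r ^+ (p.-1 * i) * s.
Proof.
have rs : r ^ s = r ^+ p.-1 by rewrite conjgE invg2id // mulgA srs invg_expg ord_r.
by rewrite conjgCV invg2id // conjXg rs -expgM.
Qed.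

Lemma sX_expr (j : bool) i : s ^+ j * r ^+ i = r ^+ (if j then p.-1 * i else i)%N * s ^+ j.
Proof. by case: j; rewrite ?expg1 ?expg0 ?mul1g ?mulg1 ?s_expr. Qed.

Lemma sX_sX (j j' : bool) : s ^+ j * s ^+ j' = s ^+ (j (+) j').
Proof.
by case: j; case: j'; rewrite /= ?expg1 ?expg0 ?mulg1 ?mul1g // -expg2 -ord_s expg_order.
Qed.

Lemma nfM e i j e' i' j' :
  nf e i j * nf e' i' j' = nf (e + e') (i + (if j then p.-1 * i' else i')%N) (j (+) j').
Proof.
have cXC x : commute (c ^+ e') x.
  exact/commute_sym/commuteX/commute_sym/c_central.
rewrite /nf !expgD -!mulgA; congr (_ * _).
rewrite !mulgA -(cXC (r ^+ i * s ^+ j)) -!mulgA; congr (_ * (_ * _)).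
by rewrite mulgA sX_expr -mulgA sX_sX.
Qed.

Lemma s_neq1 : s != 1.
Proof. by apply/eqP => s1; move: ord_s; rewrite s1 order1. Qed.

Lemma nf_inj e i j e' i' j' : nf e i j = nf e' i' j' ->
  [/\ e = e' %[mod p], i = i' %[mod p] & j = j'].
Proof.
have [_ _ _ tiCD] := dprodP defN; have [_ _ _ tiRS] := sdprodP defD2p.
have D_rs k (b : bool) : r ^+ k * s ^+ b \in <<[set r; s]>>.
  by rewrite groupM ?groupX ?mem_gen // !inE eqxx ?orbT.
rewrite /nf -!mulgA => eq_nf.
have [ce rse] := mulg_TI_inj tiCD (mem_cycle c e) (mem_cycle c e') (D_rs i j) (D_rs i' j') eq_nf.
have [re se] := mulg_TI_inj tiRS (mem_cycle r i) (mem_cycle r i') (mem_cycle s j) (mem_cycle s j') rse.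
split; [apply/eqP; rewrite -ord_c -eq_expg_mod_order ce //
       | apply/eqP; rewrite -ord_r -eq_expg_mod_order re //| ].
clear eq_nf rse; case: j j' se => [] [] //= /eqP.
  by rewrite expg1 expg0 (negbTE s_neq1).
by rewrite expg1 expg0 eq_sym (negbTE s_neq1).
Qed.

Lemma nf0 : nf 0 0 false = 1.
Proof. by rewrite /nf !expg0 !mulg1. Qed.

Lemma nfX e i n : nf e i false ^+ n = nf (e * n) (i * n) false.
Proof.
elim: n => [|n IHn]; first by rewrite expg0 !muln0 nf0.
by rewrite expgSr IHn nfM !mulnSr.
Qed.

(* Membership in the index-2 subgroup K = <c> x <r>, defined as having
   exponent p so that it is visibly invariant under automorphisms. *)
Definition Kelt (y : gT) := y ^+ p == 1.

Lemma Kelt_nf e i j : Kelt (nf e i j) = ~~ j.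
Proof.
rewrite /Kelt; case: j => /=; last first.
  by rewrite nfX /nf !expgM (expgAC c) (expgAC r) expc_p expr_p !expg1n /= expg0 !mulg1 eqxx.
have -> : p = (2 * p./2).+1 by rewrite mul2n -{1}(odd_double_half p) p_odd.
rewrite expgS expgM expg2 nfM nfX nfM /=.
by apply/negbTE/eqP; rewrite -nf0 => /nf_inj[].
Qed.

Lemma nf_eq1 e i j : nf e i j = 1 -> [/\ p %| e, p %| i & j = false].
Proof. by rewrite -nf0 => /nf_inj[]; rewrite /dvdn !mod0n => /eqP-> /eqP->. Qed.

Lemma nf_expc_dvd e i j : p %| e -> nf e i j = r ^+ i * s ^+ j.
Proof. by rewrite -ord_c order_dvdn => /eqP ce1; rewrite /nf ce1 mul1g. Qed.

Lemma nf_expr_dvd e i j : p %| i -> nf e i j = c ^+ e * s ^+ j.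
Proof. by rewrite -ord_r order_dvdn => /eqP ri1; rewrite /nf ri1 mulg1. Qed.

Lemma Kelt_nfP y : Kelt y -> exists e i, y = nf e i false.
Proof. by have [e [i [[] ->]]] := nf_surj y; rewrite Kelt_nf // => _; exists e, i. Qed.

Lemma Kelt_mul x z : ~~ Kelt x -> Kelt (x * z) = ~~ Kelt z.
Proof.
have [e [i [j ->]]] := nf_surj x; have [e' [i' [j' ->]]] := nf_surj z.
by rewrite nfM !Kelt_nf negbK; case: j; case: j'.
Qed.

Lemma central_expc z : (forall y, commute z y) -> exists e, z = c ^+ e.
Proof.
have [e [i [[] ->]]] := nf_surj z => cz.
  have := cz (nf 0 1 false); rewrite /commute !nfM muln1 /= => /nf_inj[_ + _].
  move/eqP; rewrite [1 + i]addnC eqn_modDl !modn_small ?ltn_predL //.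
  by move/eqP; have := p_gt2; lia.
have := cz (nf 0 0 true); rewrite /commute !nfM /= !addn0 add0n => /nf_inj[_ + _].
move=> /eqP; rewrite -(eqn_modDr i) -mulSnr prednK // modnMr => pii.
have /nf_expr_dvd-> : p %| i by rewrite -dvdn_double_odd /dvdn.
by exists e; rewrite mulg1.
Qed.

Lemma nf_c : nf 1 0 false = c. Proof. by rewrite /nf expg1 expg0 !mulg1. Qed.
Lemma nf_r : nf 0 1 false = r. Proof. by rewrite /nf expg0 expg1 mul1g mulg1. Qed.
Lemma nf_s : nf 0 0 true = s. Proof. by rewrite /nf !expg0 expg1 !mul1g. Qed.

Lemma Kelt_aut a y : a \in Aut [set: gT] -> Kelt (a y) = Kelt y.
Proof. by move=> Aa; rewrite /Kelt autX_eq1. Qed.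

Lemma aut_nf a e i j : a \in Aut [set: gT] -> a (nf e i j) = a c ^+ e * a r ^+ i * a s ^+ j.
Proof. by move=> Aa; rewrite /nf !autM // !autX. Qed.

Lemma aut_eq a b : a \in Aut [set: gT] -> b \in Aut [set: gT] ->
  a c = b c -> a r = b r -> a s = b s -> a = b.
Proof.
move=> Aa Ab ac ar as_; apply/permP => y; have [e [i [j ->]]] := nf_surj y.
by rewrite !aut_nf // ac ar as_.
Qed.

Lemma phiX_s m : (phi ^+ m) s = r ^+ m * s.
Proof.
elim: m => [|m IHm]; first by rewrite expg0 perm1 mul1g.
by rewrite expgSr permM IHm autM // autX // phi_r phi_s mulgA -expgSr.
Qed.

Lemma phiX_c m : (phi ^+ m) c = c. Proof. by rewrite permX iter_fix. Qed.
Lemma phiX_r m : (phi ^+ m) r = r. Proof. by rewrite permX iter_fix. Qed.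

Lemma phiX_nf m e i j : (phi ^+ m) (nf e i j) = nf e (i + m * j) j.
Proof.
rewrite aut_nf ?groupX // phiX_c phiX_r phiX_s /nf.
by case: j; rewrite /= ?expg1 ?expg0 ?muln1 ?muln0 ?addn0 // expgD !mulgA.
Qed.

Lemma phi_p : phi ^+ p = 1.
Proof.
by apply: aut_eq; rewrite ?groupX ?group1 // perm1 ?phiX_c ?phiX_r // phiX_s expr_p mul1g.
Qed.

Lemma aut_eq_phiX a : a \in Aut [set: gT] -> a ^+ (p ^ 2) = 1 -> exists m, a = phi ^+ m.
Proof.
move=> Aa ap2.
have ac : a c = c.
  have [e ac] : exists e, a c = c ^+ e.
    apply: central_expc => y.
    by rewrite /commute -{1 2}(permKV a y) -!autM // (c_central (a^-1 y)).
  exact: aut_fixed_of_pow_prime_order Aa p_pr ord_c ap2 ac.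
have [e [m [j as_]]] := nf_surj (a s).
have j_true : j = true.
  by apply: negbFE; rewrite -(Kelt_nf e m) -as_ Kelt_aut // -nf_s Kelt_nf.
subst j.
have : nf e m true ^+ 2 = 1.
  by rewrite -as_ -autX // expg2 -{2}(invg2id ord_s) mulgV aut1.
rewrite expg2 nfM => /nf_eq1[+ _ _]; rewrite dvdn_double_odd => pe.
have {pe}as_ : a s = nf 0 m true by rewrite as_ !nf_expc_dvd ?dvdn0.
have [e' [b ar]] : exists e' b, a r = nf e' b false.
  by apply: Kelt_nfP; rewrite Kelt_aut // -nf_r Kelt_nf.
have : a s * a r * a s * a r = 1 by rewrite -!autM // srs mulVg aut1.
rewrite as_ ar !nfM /= add0n addn0 => /nf_eq1[+ _ _]; rewrite dvdn_double_odd => pe'.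
rewrite nf_expc_dvd // expg0 mulg1 in ar.
have {}ar := aut_fixed_of_pow_prime_order Aa p_pr ord_r ap2 ar.
exists m; apply: aut_eq; rewrite ?groupX ?phiX_c ?phiX_r //.
by rewrite as_ phiX_s nf_expc_dvd ?dvdn0 ?expg1.
Qed.

Definition holK e i m := holp (nf e i false) (phi ^+ m).

Lemma holK_Hol e i m : holK e i m \in Hol gT.
Proof. by apply/imset2P; exists (nf e i false) (phi ^+ m); rewrite ?in_setT ?groupX. Qed.

Lemma holK_nf e i m e' i' j : holK e i m (nf e' i' j) = nf (e + e') (i + (i' + m * j)) j.
Proof. by rewrite holpE phiX_nf nfM. Qed.

Lemma holKM e i m e' i' m' : holK e i m * holK e' i' m' = holK (e + e') (i + i') (m + m').
Proof. by rewrite holpM ?groupX // phiX_nf muln0 addn0 nfM -expgD addnC [i' + i]addnC. Qed.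

Lemma holKX e i m n : holK e i m ^+ n = holK (e * n) (i * n) (m * n).
Proof.
elim: n => [|n IHn]; first by rewrite !muln0 expg0 /holK nf0 expg0 holp1.
by rewrite expgSr IHn holKM !mulnSr.
Qed.

Lemma holK0 : holK 0 0 0 = 1.
Proof. by rewrite /holK nf0 expg0 holp1. Qed.

Lemma holK_mod e i m : holK e i m = holK (e %% p) (i %% p) (m %% p).
Proof. by rewrite /holK /nf (expg_mod m phi_p) -{1}ord_c -{1}ord_r !expg_mod_order. Qed.

Lemma eq_holK e i m e' i' m' : (holK e i m == holK e' i' m') =
  [&& e == e' %[mod p], i == i' %[mod p] & m == m' %[mod p]].
Proof.
apply/eqP/and3P => [eq_h | [/eqP ee /eqP ii /eqP mm]]; last first.
  by rewrite holK_mod ee ii mm -holK_mod.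
have h0 : holK e i m (nf 0 0 false) = holK e' i' m' (nf 0 0 false) by rewrite eq_h.
have h1 : holK e i m (nf 0 0 true) = holK e' i' m' (nf 0 0 true) by rewrite eq_h.
move: h0 h1; rewrite !holK_nf !muln0 !muln1 !addn0 !add0n => /nf_inj[-> ii _] /nf_inj[_ + _].
by move/eqP; rewrite -modnDml ii modnDml eqn_modDl => ->; rewrite !eqxx.
Qed.

Lemma holK_eq1 e i m : (holK e i m == 1) = [&& p %| e, p %| i & p %| m].
Proof. by rewrite -holK0 eq_holK !mod0n. Qed.

Lemma holK_fixed e i m e' i' j : holK e i m (nf e' i' j) = nf e' i' j ->
  p %| e /\ p %| i + m * j.
Proof.
rewrite holK_nf -{2}[e']add0n -{2}[i']addn0 addnCA => /nf_inj[/eqP + /eqP + _].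
by rewrite eqn_modDr eqn_modDl /dvdn !mod0n.
Qed.

Lemma holK_r m : holK 0 1 m = holp r (phi ^+ m). Proof. by rewrite /holK nf_r. Qed.
Lemma holK_c m : holK 1 0 m = holp c (phi ^+ m). Proof. by rewrite /holK nf_c. Qed.

Section Akl.
Variables k l : nat.

(* (r, phi^k)^x (c, phi^l)^y = holK y x (kx + ly), see [holK_gens]. *)
Definition Aset : {set {perm gT}} :=
  [set holK u.2 u.1 (k * u.1 + l * u.2) | u : 'I_p * 'I_p].

Lemma mem_Aset x y : holK y x (k * x + l * y) \in Aset.
Proof.
apply/imsetP; exists (Ordinal (ltn_pmod x p_gt0), Ordinal (ltn_pmod y p_gt0)) => //=.
by apply/eqP; rewrite eq_holK !modn_mod !eqxx; apply/eqP/modn_lin; rewrite modn_mod.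
Qed.

Lemma AsetP h : h \in Aset -> exists x y, h = holK y x (k * x + l * y).
Proof. by case/imsetP => u _ ->; exists u.1, u.2. Qed.

Lemma Aset_group : group_set Aset.
Proof.
apply/group_setP; split; first by have := mem_Aset 0 0; rewrite !muln0 holK0.
move=> _ _ /AsetP[x [y ->]] /AsetP[x' [y' ->]].
by rewrite holKM addnACA -!mulnDr mem_Aset.
Qed.

Canonical Aset_groupType := Group Aset_group.

Lemma holK_gens x y : holK 0 1 k ^+ x * holK 1 0 l ^+ y = holK y x (k * x + l * y).
Proof. by rewrite !holKX holKM !mul0n !mul1n add0n addn0. Qed.

Lemma Akl_Aset : Akl r c phi k l = Aset.
Proof.
apply/eqP; rewrite eqEsubset gen_subG; apply/andP; split.
  apply/subsetP => h; rewrite !inE -holK_r -holK_c => /orP[]/eqP->.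
    by have := mem_Aset 1 0; rewrite muln0 muln1 addn0.
  by have := mem_Aset 0 1; rewrite muln0 muln1 add0n.
apply/subsetP => _ /AsetP[x [y ->]]; rewrite -holK_gens holK_r holK_c.
by rewrite groupM ?groupX // mem_gen // !inE eqxx ?orbT.
Qed.

Lemma card_Aset : #|Aset| = (p ^ 2)%N.
Proof.
rewrite card_imset; first by rewrite card_prod card_ord mulnn.
move=> -[x y] [x' y'] /eqP.
rewrite eq_holK => /and3P[/eqP yy /eqP xx _].
by rewrite !modn_small // in xx yy; congr (_, _); apply: val_inj.
Qed.

Lemma Aset_abelem : p.-abelem Aset.
Proof.
rewrite abelemE //; apply/andP; split.
  apply/centsP => _ /AsetP[x [y ->]] _ /AsetP[x' [y' ->]].
  by rewrite /commute !holKM; congr holK; exact: addnC.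
apply/exponentP => _ /AsetP[x [y ->]].
by apply/eqP; rewrite holKX holK_eq1 !dvdn_mull.
Qed.

Hypothesis lt_k_pred : k < p.-1.

Lemma Aset_semiregular : hol_semiregular Aset.
Proof.
move=> _ n /AsetP[x [y ->]]; have [e [i [j ->]]] := nf_surj n.
move=> /holK_fixed[py pxj]; have px : p %| x.
  case: j pxj => /=; last by rewrite muln0 addn0.
  rewrite muln1 addnA (dvdn_addl _ (dvdn_mull l py)) -mulSn Euclid_dvdM // => /orP[|//].
  by move/dvdn_leq => /(_ isT); lia.
by apply/eqP; rewrite holK_eq1 py px dvdn_add ?dvdn_mull.
Qed.

End Akl.

Lemma Akl_isog k l : Akl r c phi k l \isog [set: 'Z_p * 'Z_p].
Proof.
rewrite Akl_Aset (isog_abelem_card _ (Aset_abelem k l)) (ZpZp_abelem p_pr).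
by rewrite card_Aset (card_ZpZp p_pr) eqxx.
Qed.

Lemma Akl_semiregular k l : k < p.-1 ->
  [/\ Akl r c phi k l \subset Hol gT, #|Akl r c phi k l| = (p ^ 2)%N
    & hol_semiregular (Akl r c phi k l)].
Proof.
move=> lt_k; rewrite Akl_Aset card_Aset; split=> //; last exact: Aset_semiregular.
by apply/subsetP => _ /AsetP[x [y ->]]; apply: holK_Hol.
Qed.

Lemma Akl_inj k l k' l' : k < p -> l < p -> k' < p -> l' < p ->
  Akl r c phi k l = Akl r c phi k' l' -> k = k' /\ l = l'.
Proof.
move=> lt_k lt_l lt_k' lt_l'; rewrite !Akl_Aset => eqA.
have coef x0 y0 : (k * x0 + l * y0 = k' * x0 + l' * y0 %[mod p])%N.
  have := mem_Aset k l x0 y0; rewrite eqA => /AsetP[x [y /eqP]].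
  rewrite eq_holK => /and3P[/eqP yy /eqP xx /eqP ->].
  exact/modn_lin/esym/yy/esym/xx.
have := coef 1%N 0%N; have := coef 0%N 1%N.
by rewrite !muln0 !muln1 !addn0 !add0n !modn_small.
Qed.

Lemma transl_Kelt x a : a \in Aut [set: gT] -> holp x a ^+ (p ^ 2) = 1 -> Kelt x.
Proof.
move=> Aa hp2; apply/negPn/negP => Kx.
have Kelt_iter n : Kelt ((holp x a ^+ n) 1) = ~~ odd n.
  elim: n => [|n IHn]; first by rewrite expg0 perm1 /Kelt expg1n eqxx.
  by rewrite expgSr permM holpE Kelt_mul // Kelt_aut // IHn oddS negbK.
by have := Kelt_iter (p ^ 2)%N; rewrite hp2 perm1 /Kelt expg1n eqxx oddX p_odd orbT.
Qed.

Lemma holK_of_exp_p2 h e i : h \in Hol gT -> h ^+ (p ^ 2) = 1 -> h 1 = nf e i false ->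
  exists m, h = holK e i m.
Proof.
case/imset2P=> x a _ Aa -> hp2; rewrite holp_at1 // => ->.
have [y hy] := holpX x (p ^ 2) Aa.
have ap2 : a ^+ (p ^ 2) = 1.
  have y1 : y = 1 by rewrite -(holp_at1 y (groupX (p ^ 2)%N Aa)) -hy hp2 perm1.
  by rewrite -(holp1 (a ^+ _)) -y1 -hy.
by have [m ->] := aut_eq_phiX Aa ap2; exists m.
Qed.

Lemma card_Kelt : #|[set y | Kelt y]| <= p ^ 2.
Proof.
pose nf_ord (u : 'I_p * 'I_p) := nf u.1 u.2 false.
have sKnf : [set y | Kelt y] \subset [set nf_ord u | u in [set: 'I_p * 'I_p]].
  apply/subsetP => y; rewrite inE => /Kelt_nfP[e [i ->]]; apply/imsetP.
  exists (Ordinal (ltn_pmod e p_gt0), Ordinal (ltn_pmod i p_gt0)); rewrite ?inE //.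
  by rewrite /nf_ord /nf /= -{1}ord_c -{1}ord_r !expg_mod_order.
apply: leq_trans (subset_leq_card sKnf) _; apply: leq_trans (leq_imset_card _ _) _.
by rewrite cardsT card_prod card_ord mulnn.
Qed.

Lemma semiregular_eq_Akl (H : {group {perm gT}}) :
  H \subset Hol gT -> #|H| = (p ^ 2)%N -> hol_semiregular H ->
  exists k l, [/\ k < p.-1, l < p & H :=: Akl r c phi k l].
Proof.
move=> sHHol cardH sregH.
have hp2 h : h \in H -> h ^+ (p ^ 2) = 1 by rewrite -cardH; apply: expg_cardG.
have imH : [set (h : {perm gT}) 1 | h in H] = [set y | Kelt y].
  apply/eqP; rewrite eqEcard (card_in_imset (semiregular_orbit_inj sregH)) cardH card_Kelt andbT.
  apply/subsetP => _ /imsetP[h Hh ->]; rewrite inE.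
  have /imset2P[x a _ Aa hE] := subsetP sHHol h Hh.
  by rewrite hE holp_at1 //; apply: (transl_Kelt Aa); rewrite -hE hp2.
have holK_in e i : exists m, holK e i m \in H.
  have : nf e i false \in [set y | Kelt y] by rewrite inE Kelt_nf.
  rewrite -imH => /imsetP[h Hh /esym/holK_of_exp_p2[||m hE]]; rewrite ?hp2 ?(subsetP sHHol) //.
  by exists m; rewrite -hE.
have [k Hk] := holK_in 0%N 1%N; have [l Hl] := holK_in 1%N 0%N.
rewrite holK_mod mod0n (modn_small p_gt1) in Hk.
rewrite holK_mod mod0n (modn_small p_gt1) in Hl.
have k_neq : k %% p != p.-1.
  (* otherwise (r, phi^(p-1)) would fix s *)
  apply/eqP => kE.
  have : holK 0 1 (k %% p) (nf 0 0 true) = nf 0 0 true.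
    by rewrite holK_nf kE muln1 add0n add1n prednK // /nf expr_p.
  by move/(sregH _ _ Hk)/eqP; rewrite holK_eq1 dvdn1 (gtn_eqF p_gt1) andbF.
exists (k %% p), (l %% p); split; rewrite ?ltn_pmod //.
  by rewrite ltn_neqAle k_neq -ltnS prednK // ltn_pmod.
apply/eqP; rewrite eq_sym eqEcard Akl_Aset card_Aset cardH leqnn andbT -Akl_Aset gen_subG.
by apply/subsetP => h; rewrite !inE -holK_r -holK_c => /orP[]/eqP->.
Qed.

Lemma semiregular_HolP (H : {group {perm gT}}) :
  (H \subset Hol gT) /\ #|H| = (p ^ 2)%N /\ hol_semiregular H
  <-> exists k l, [/\ k <= p - 2, l <= p - 1 & H :=: Akl r c phi k l].
Proof.
have := p_gt2; split=> [[sHHol [cardH sregH]] | [k [l [le_k _ ->]]]].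
  have [k [l [lt_k lt_l eqH]]] := semiregular_eq_Akl sHHol cardH sregH.
  by exists k, l; split=> //; lia.
have lt_k : k < p.-1 by lia.
by case: (Akl_semiregular l lt_k).
Qed.

End CpTimesD2p.

Theorem lemma17 (p : nat) (gT : finGroupType) (c r s : gT) (phi : {perm gT}) :
  prime p -> odd p ->
  (<[c]> \x <<[set r; s]>>)%g = [set: gT] ->
  #[c]%g = p -> #[r]%g = p -> #[s]%g = 2 -> (s * r * s = r^-1)%g ->
  phi \in Aut [set: gT] -> phi r = r -> phi s = (r * s)%g -> phi c = c ->
  [/\ (forall k l, k <= p - 2 -> l <= p - 1 ->
         Akl r c phi k l \isog [set: 'Z_p * 'Z_p]),
      (forall k l k' l', k <= p - 2 -> l <= p - 1 -> k' <= p - 2 -> l' <= p - 1 ->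
         Akl r c phi k l = Akl r c phi k' l' -> k = k' /\ l = l')
    & (forall H : {group {perm gT}},
         (H \subset Hol gT) /\ #|H| = p ^ 2 /\ hol_semiregular H
         <-> exists k l, [/\ k <= p - 2, l <= p - 1 & (H :=: Akl r c phi k l)])].
Proof.
move=> p_pr p_odd defN ord_c ord_r ord_s srs Aphi phi_r phi_s phi_c.
have lt2p := p_gt2 p_pr p_odd.
split=> [k l _ _ | k l k' l' le_k le_l le_k' le_l' | H].
- by apply: (Akl_isog (p := p) (s := s)).
- by apply: (Akl_inj (p := p) (s := s)) => //; lia.
- by apply: (semiregular_HolP (p := p) (s := s)).
Qed.
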